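(* For $i\in\{1,2\}$, let $G_i$ be a graph with maximum degree $\Delta_i$ and degeneracy $d_i$ that contains $K_{s_i,t_i}$ as a subgraph, where $1\leq s_i\leq t_i$. Then $$\max\{d_1d_2,\ \min\{s_1t_2,s_2t_1\},\ \min\{\Delta_1,\Delta_2\}\}\ \leq\ \operatorname{degen}(G_1\times G_2)\ \leq\ \min\{d_1\Delta_2,\ d_2\Delta_1\}.$$
   Context: The degeneracy $\operatorname{degen}(G)$ of a graph $G$ is the minimum integer $d$ such that every subgraph of $G$ has minimum degree at most $d$. The direct product $G_1 \times G_2$ has vertex set $V(G_1)\times V(G_2)$, with $(a,v)(b,u)$ an edge iff $ab\in E(G_1)$ and $uv\in E(G_2)$. *)

(* Finite simple graphs: T : finType with a symmetric,
   irreflexive adjacency relation e : rel T. *)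
From mathcomp Require Import all_boot.
Set Implicit Arguments. Unset Strict Implicit. Unset Printing Implicit Defensive.

Section Graphs.
Variable T : finType.
Implicit Types (e : rel T).

Definition deg e (v : T) : nat := #|[set u | e v u]|.

Definition maxdeg e : nat := \max_(v : T) deg e v.

(* (S, F) is a subgraph of (T, e): S a vertex subset, F a symmetric set of
   ordered pairs (each edge {x,y} recorded as (x,y) and (y,x)), all edges of
   e with both ends in S. *)
Definition subgraphb e (S : {set T}) (F : {set T * T}) : bool :=
  [forall x, forall y, ((x, y) \in F) ==>
     [&& e x y, x \in S, y \in S & (y, x) \in F]].

Definition subdeg (F : {set T * T}) (v : T) : nat := #|[set u | (v, u) \in F]|.

Definition degen_bound e (d : nat) : bool :=
  [forall S : {set T}, forall F : {set T * T},
     ((S != set0) && subgraphb e S F) ==> [exists v in S, subdeg F v <= d]].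

Lemma degen_bound_exists e : exists d, degen_bound e d.
Proof.
exists #|T|; apply/forallP => S; apply/forallP => F; apply/implyP.
case/andP => /set0Pn [v vS] _; apply/existsP; exists v.
by rewrite vS /subdeg max_card.
Qed.

Definition degen e : nat := ex_minn (degen_bound_exists e).

Definition contains_Kst e (s t : nat) : Prop :=
  exists A B : {set T}, [/\ [disjoint A & B], #|A| = s, #|B| = t &
    forall a b, a \in A -> b \in B -> e a b].

End Graphs.

Definition dprod_rel (T1 T2 : finType) (e1 : rel T1) (e2 : rel T2) : rel (T1 * T2) :=
  fun x y => e1 x.1 y.1 && e2 x.2 y.2.

(* Upper bound: the projection onto either factor is a homomorphism, and a
   vertex (x1, x2) has at most deg x2 <= Delta_2 neighbours over each vertex
   of G1; taking a vertex of small degree in the projection of a subgraph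
   bounds its degree by d_1 Delta_2.
   Lower bounds: the product of d_1- and d_2-cores is a subgraph of minimum
   degree d_1 d_2, and complete bipartite subgraphs multiply: K_{s1,t1} and
   K_{s2,t2} give K_{s1 t2, t1 s2}, and the stars at vertices of maximum
   degree give K_{Delta_2, Delta_1}. *)
From mathcomp Require Import all_boot.
Set Implicit Arguments. Unset Strict Implicit. Unset Printing Implicit Defensive.

Section Degeneracy.
Variable T : finType.
Implicit Types (e : rel T) (S : {set T}) (F : {set T * T}).

Lemma subgraphP e S F x y : subgraphb e S F -> (x, y) \in F ->
  [/\ e x y, x \in S, y \in S & (y, x) \in F].
Proof. by move=> /forallP/(_ x)/forallP/(_ y)/implyP h /h /and4P. Qed.

Lemma degen_boundP e : degen_bound e (degen e).
Proof. by rewrite /degen; case: ex_minnP. Qed.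

Lemma degen_min e d : degen_bound e d -> degen e <= d.
Proof. by rewrite /degen; case: ex_minnP => m _; apply. Qed.

Lemma degen_ge e S F k : S != set0 -> subgraphb e S F ->
  (forall v, v \in S -> k <= subdeg F v) -> k <= degen e.
Proof.
move=> Sn sF hk; have /forallP/(_ S)/forallP/(_ F)/implyP := degen_boundP e.
rewrite Sn sF => /(_ isT) /exists_inP[v vS le]; exact: leq_trans (hk v vS) le.
Qed.

Lemma degen_core e : 0 < degen e -> exists S, exists F,
  [/\ S != set0, subgraphb e S F & forall v, v \in S -> degen e <= subdeg F v].
Proof.
move=> degen_gt0; have : ~~ degen_bound e (degen e).-1.
  by apply/negP => /degen_min; rewrite leqNgt ltn_predL degen_gt0.
rewrite negb_forall => /existsP[S]; rewrite negb_forall => /existsP[F].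
rewrite negb_imply negb_exists_in => /andP[/andP[Sn sF] /forall_inP small].
by exists S, F; split => // v /small; rewrite -ltnNge prednK.
Qed.

Definition induced e S : {set T * T} :=
  [set p | [&& e p.1 p.2, p.1 \in S & p.2 \in S]].

Lemma induced_subgraph e S : symmetric e -> subgraphb e S (induced e S).
Proof.
move=> sym; apply/forallP => x; apply/forallP => y; apply/implyP.
rewrite !inE /= => /and3P[exy -> ->]; by rewrite exy sym exy.
Qed.

Definition complete_bipartite e (A B : {set T}) : Prop :=
  [disjoint A & B] /\ forall a b, a \in A -> b \in B -> e a b.

Lemma degen_complete_bipartite e A B : symmetric e ->
  complete_bipartite e A B -> minn #|A| #|B| <= degen e.
Proof.
move=> sym [_ eAB].
have [->|/card_gt0P[a aA]] := posnP #|A|; first by rewrite min0n.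
have [->|B_gt0] := posnP #|B|; first by rewrite minn0.
pose F := [set p : T * T | (p.1 \in A) && (p.2 \in B) || (p.1 \in B) && (p.2 \in A)].
apply: (@degen_ge e (A :|: B) F).
- by apply/set0Pn; exists a; rewrite inE aA.
- apply/forallP => x; apply/forallP => y; apply/implyP.
  rewrite !inE /= => /orP[/andP[xA yB]|/andP[xB yA]].
  + by rewrite eAB // xA yB !orbT.
  + by rewrite sym eAB // xB yA !orbT.
- move=> v; rewrite inE => /orP[vA|vB].
  + apply: leq_trans (geq_minr _ _) (subset_leq_card _).
    by apply/subsetP => u uB; rewrite !inE /= vA uB.
  + apply: leq_trans (geq_minl _ _) (subset_leq_card _).
    by apply/subsetP => u uA; rewrite !inE /= vB uA orbT.
Qed.

Lemma complete_bipartite_star e v : irreflexive e ->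
  complete_bipartite e [set v] [set u | e v u].
Proof.
move=> irr; split=> [|a b]; last by rewrite !inE => /eqP->.
by rewrite disjoints1 inE irr.
Qed.

Lemma deg_le_maxdeg e v : deg e v <= maxdeg e.
Proof. exact: leq_bigmax. Qed.

Lemma maxdeg_attained e : 0 < maxdeg e -> exists v, deg e v = maxdeg e.
Proof.
have [T0|/(eq_bigmax (deg e))[v maxv]] := posnP #|T|; last by exists v.
move=> maxdeg_gt0; suff : maxdeg e <= 0 by rewrite leqNgt maxdeg_gt0.
by apply/bigmax_leqP => v _; move: (card0_eq T0 v); rewrite !inE.
Qed.

End Degeneracy.

Lemma degen_hom_le (T T' : finType) (e : rel T) (e' : rel T') (pi : T -> T') D :
  symmetric e' -> (forall x y, e x y -> e' (pi x) (pi y)) ->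
  (forall x w, #|[set y | e x y && (pi y == w)]| <= D) ->
  degen e <= degen e' * D.
Proof.
move=> sym' hom fibreD; apply: degen_min; apply/forallP => S; apply/forallP => F.
apply/implyP => /andP[Sn sF]; pose S' := pi @: S.
have S'n : S' != set0.
  by case/set0Pn: Sn => x xS; apply/set0Pn; exists (pi x); apply: imset_f.
have /forallP/(_ S')/forallP/(_ (induced e' S'))/implyP := degen_boundP e'.
rewrite S'n induced_subgraph //= => /(_ isT) /exists_inP[_ /imsetP[x xS ->] small].
apply/exists_inP; exists x => //; apply: leq_trans (leq_mul small (leqnn D)).
pose N := [set w | (pi x, w) \in induced e' S'].
rewrite /subdeg -sum1_card (partition_big pi (mem N)) -?sum_nat_const.
  apply: leq_sum => w _; rewrite sum1_card; apply: leq_trans (fibreD x w).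
  apply/subset_leq_card/subsetP => y /andP[]; rewrite !inE => xyF ->.
  by case: (subgraphP sF xyF) => ->.
move=> y; rewrite inE => xyF; have [exy _ yS _] := subgraphP sF xyF.
by rewrite !inE /= hom // !imset_f.
Qed.

Section DirectProduct.
Variables (T1 T2 : finType) (e1 : rel T1) (e2 : rel T2).
Hypotheses (sym1 : symmetric e1) (sym2 : symmetric e2).
Local Notation e := (dprod_rel e1 e2).

Lemma dprod_rel_sym : symmetric e.
Proof. by move=> x y; rewrite /dprod_rel sym1 sym2. Qed.

Lemma degen_dprod_ge : degen e1 * degen e2 <= degen e.
Proof.
have [->|/degen_core[S1 [F1 [S1n sF1 core1]]]] := posnP (degen e1); first by [].
have [->|/degen_core[S2 [F2 [S2n sF2 core2]]]] := posnP (degen e2).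
  by rewrite muln0.
pose F := [set p : (T1 * T2) * (T1 * T2) |
  ((p.1.1, p.2.1) \in F1) && ((p.1.2, p.2.2) \in F2)].
apply: (@degen_ge _ _ (setX S1 S2) F).
- case/set0Pn: S1n => a aS; case/set0Pn: S2n => b bS.
  by apply/set0Pn; exists (a, b); rewrite inE aS bS.
- apply/forallP => -[x1 x2]; apply/forallP => -[y1 y2]; apply/implyP.
  rewrite !inE /= => /andP[/(subgraphP sF1)[f1 x1S y1S ->] /(subgraphP sF2)[f2 x2S y2S ->]].
  by rewrite /dprod_rel /= f1 f2 x1S x2S y1S y2S.
- move=> [v1 v2]; rewrite inE /= => /andP[v1S v2S]; rewrite /subdeg.
  have -> : [set u | (v1, v2, u) \in F] =
      setX [set u | (v1, u) \in F1] [set u | (v2, u) \in F2].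
    by apply/setP => -[a b]; rewrite !inE.
  by rewrite cardsX leq_mul ?core1 ?core2.
Qed.

Lemma dprod_complete_bipartite A1 B1 A2 B2 :
  complete_bipartite e1 A1 B1 -> complete_bipartite e2 A2 B2 ->
  complete_bipartite e (setX A1 B2) (setX B1 A2).
Proof.
move=> [dis1 e1AB] [_ e2AB]; split.
  rewrite -setI_eq0; apply/eqP/setP => -[a b]; rewrite !inE /=.
  by case aA: (a \in A1); rewrite ?(disjointFr dis1 aA) ?andbF.
move=> [a1 b2] [b1 a2]; rewrite !inE /= => /andP[a1A b2B] /andP[b1B a2A].
by rewrite /dprod_rel /= e1AB // sym2 e2AB.
Qed.

Lemma degen_dprod_Kst s1 t1 s2 t2 :
  contains_Kst e1 s1 t1 -> contains_Kst e2 s2 t2 ->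
  minn (s1 * t2) (s2 * t1) <= degen e.
Proof.
move=> [A1 [B1 [dis1 <- <- e1AB]]] [A2 [B2 [dis2 <- <- e2AB]]].
have := degen_complete_bipartite dprod_rel_sym
  (dprod_complete_bipartite (conj dis1 e1AB) (conj dis2 e2AB)).
by rewrite !cardsX (mulnC #|B1|).
Qed.

Lemma degen_dprod_maxdeg : irreflexive e1 -> irreflexive e2 ->
  minn (maxdeg e1) (maxdeg e2) <= degen e.
Proof.
move=> irr1 irr2.
have [->|/maxdeg_attained[v1 <-]] := posnP (maxdeg e1); first by rewrite min0n.
have [->|/maxdeg_attained[v2 <-]] := posnP (maxdeg e2); first by rewrite minn0.
have := degen_complete_bipartite dprod_rel_sym (dprod_complete_bipartite
  (complete_bipartite_star v1 irr1) (complete_bipartite_star v2 irr2)).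
by rewrite !cardsX !cards1 mul1n muln1 minnC.
Qed.

Lemma degen_dprod_le_fst : degen e <= degen e1 * maxdeg e2.
Proof.
apply: (degen_hom_le (pi := fst)) => // [x y /andP[]//|x w].
apply: leq_trans (_ : #|setX [set w] [set u | e2 x.2 u]| <= _).
  apply/subset_leq_card/subsetP => -[a b].
  by rewrite !inE /dprod_rel /= => /andP[/andP[_ ->] ->].
by rewrite cardsX cards1 mul1n deg_le_maxdeg.
Qed.

Lemma degen_dprod_le_snd : degen e <= degen e2 * maxdeg e1.
Proof.
apply: (degen_hom_le (pi := snd)) => // [x y /andP[]//|x w].
apply: leq_trans (_ : #|setX [set u | e1 x.1 u] [set w]| <= _).
  apply/subset_leq_card/subsetP => -[a b].
  by rewrite !inE /dprod_rel /= => /andP[/andP[-> _] ->].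
by rewrite cardsX cards1 muln1 deg_le_maxdeg.
Qed.

End DirectProduct.

Theorem mainTheorem5 (T1 T2 : finType) (e1 : rel T1) (e2 : rel T2)
  (sym1 : symmetric e1) (irr1 : irreflexive e1)
  (sym2 : symmetric e2) (irr2 : irreflexive e2)
  (s1 t1 s2 t2 : nat)
  (hs1 : 1 <= s1) (hst1 : s1 <= t1) (hs2 : 1 <= s2) (hst2 : s2 <= t2)
  (K1 : contains_Kst e1 s1 t1) (K2 : contains_Kst e2 s2 t2) :
  maxn (maxn (degen e1 * degen e2) (minn (s1 * t2) (s2 * t1)))
       (minn (maxdeg e1) (maxdeg e2))
  <= degen (dprod_rel e1 e2)
  <= minn (degen e1 * maxdeg e2) (degen e2 * maxdeg e1).
Proof.
rewrite !geq_max leq_min degen_dprod_ge degen_dprod_Kst //.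
by rewrite degen_dprod_maxdeg // degen_dprod_le_fst // degen_dprod_le_snd.
Qed.
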